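(* Let $n\ge1$ and let $\lambda_1,\dots,\lambda_n$ be distinct complex numbers with $\mathrm{Re}(\lambda_j)>-1/2$ for all $j$. Then for every Müntz polynomial $P(x)=\sum_{j=1}^na_jx^{\lambda_j}$ ($x\in(0,1]$) with $a_j\in\mathbb{C}$, $$\|xP'(x)\|_{L_2[0,1]} \le \left(\max_{1\le j\le n}|\lambda_j| + \left(\sum_{j=1}^n\left(1+2\mathrm{Re}(\lambda_j)\right)\sum_{k=j+1}^n\left(1+2\mathrm{Re}(\lambda_k)\right)\right)^{1/2}\right)\|P\|_{L_2[0,1]}.$$
   Context: $x^{\lambda}:=e^{\lambda\log x}$ for $x\in(0,1]$; $\|g\|_{L_2[0,1]}=(\int_0^1|g(x)|^2dx)^{1/2}$. *)

From Stdlib Require Import Reals Lra.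
Open Scope R_scope.

Definition Cx : Type := (R * R)%type.
Definition Re (z : Cx) : R := fst z.
Definition Im (z : Cx) : R := snd z.
Definition Cplus (z w : Cx) : Cx := (Re z + Re w, Im z + Im w).
Definition Cmult (z w : Cx) : Cx :=
  (Re z * Re w - Im z * Im w, Re z * Im w + Im z * Re w).
Definition Cexp (z : Cx) : Cx := (exp (Re z) * cos (Im z), exp (Re z) * sin (Im z)).
Definition Cnorm2 (z : Cx) : R := Re z ^ 2 + Im z ^ 2.
Definition Cmod (z : Cx) : R := sqrt (Cnorm2 z).

Definition cpow (x : R) (lam : Cx) : Cx := Cexp (Cmult lam (ln x, 0)).

Fixpoint Csum (n : nat) (f : nat -> Cx) : Cx :=
  match n with O => (0, 0) | S m => Cplus (Csum m f) (f m) end.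
Fixpoint Rsum (n : nat) (f : nat -> R) : R :=
  match n with O => 0 | S m => Rsum m f + f m end.

(* Muntz polynomial P(x) = sum_{j<n} a_j x^{lam_j} (indices shifted to 0..n-1) *)
Definition muntz (n : nat) (a lam : nat -> Cx) (x : R) : Cx :=
  Csum n (fun j => Cmult (a j) (cpow x (lam j))).

Fixpoint maxmod (n : nat) (lam : nat -> Cx) : R :=
  match n with O => 0 | S m => Rmax (maxmod m lam) (Cmod (lam m)) end.

(* sum_{j} (1 + 2 Re lam_j) sum_{k > j} (1 + 2 Re lam_k), indices 0..n-1 *)
Definition wt (lam : nat -> Cx) (j : nat) : R := 1 + 2 * Re (lam j).
Definition dsum (n : nat) (lam : nat -> Cx) : R :=
  Rsum n (fun j => wt lam j * Rsum (n - j - 1) (fun i => wt lam (j + 1 + i))).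

Definition improper_int01 (f : R -> R) (I : R) : Prop :=
  (forall e, 0 < e <= 1 -> inhabited (Riemann_integrable f e 1)) /\
  (forall eps, 0 < eps -> exists delta, 0 < delta /\
     forall e (pr : Riemann_integrable f e 1),
       0 < e -> e < delta -> e <= 1 -> Rabs (RiemannInt pr - I) < eps).

(* Let B(a, b) = sum_{j,k} a_j conj(b_k) / (1 + lam_j + conj lam_k); this is the L2[0,1]
   inner product of the Muntz polynomials with coefficients a and b, hence positive
   semidefinite.  With Lambda = diag(lam) and sigma(a) = sum_j a_j = P_a(1), integrating
   (x P_a conj P_b)' over [0,1] gives
     B(Lambda a, b) + B(a, Lambda b) + B(a, b) = sigma(a) conj sigma(b).
   Take the flag V_m of vectors supported on the first m indices.  If u in V_(m+1) is
   orthogonal to V_m, this identity yields |sigma(u)|^2 = (1 + 2 Re lam_m) |u|^2, and the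
   vector (Lambda - lam_m) u, which lies in V_m, has
     |(Lambda - lam_m) u|^2 <= (1 + 2 Re lam_m) (sum_{k<m} (1 + 2 Re lam_k)) |u|^2.
   Induction along the flag splits Lambda a into a part of norm at most max_j |lam_j| |a|
   and a part of norm at most (sum_j (1 + 2 Re lam_j) sum_{k<j} (1 + 2 Re lam_k))^(1/2) |a|. *)

From Stdlib Require Import Reals Lra Lia Psatz FunctionalExtensionality.
From Coquelicot Require Import Coquelicot.
From Pilot Require Import Defs.
Open Scope R_scope.

(* The pairs of [Defs] are Coquelicot's [C], whose field structure [ring] knows. *)
Ltac cring := match goal with |- @eq _ ?a ?b => change (@eq C a b); ring end.

Lemma Csum_S (m : nat) (f : nat -> C) : Csum (S m) f = (Csum m f + f m)%C.
Proof. reflexivity. Qed.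

Lemma Csum_ext (m : nat) (f g : nat -> C) :
  (forall j, (j < m)%nat -> f j = g j) -> Csum m f = Csum m g.
Proof.
  revert f g; induction m; intros f g H; simpl; auto.
  rewrite (IHm f g) by (intros; apply H; lia). rewrite (H m) by lia. reflexivity.
Qed.

Lemma Csum_eq0 (m : nat) (f : nat -> C) :
  (forall j, (j < m)%nat -> f j = RtoC 0) -> Csum m f = RtoC 0.
Proof.
  intros H. rewrite (Csum_ext m f (fun _ => RtoC 0)) by auto.
  clear. induction m; [reflexivity|]. rewrite Csum_S, IHm. apply injective_projections; simpl; lra.
Qed.

Lemma Csum_add (m : nat) (f g : nat -> C) :
  Csum m (fun j => f j + g j)%C = (Csum m f + Csum m g)%C.
Proof.
  induction m; rewrite ?Csum_S.
  - apply injective_projections; simpl; lra.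
  - rewrite IHm. cring.
Qed.

Lemma Csum_mull (m : nat) (c : C) (f : nat -> C) :
  Csum m (fun j => c * f j)%C = (c * Csum m f)%C.
Proof.
  induction m; rewrite ?Csum_S.
  - apply injective_projections; simpl; lra.
  - rewrite IHm. cring.
Qed.

Lemma Csum_conj (m : nat) (f : nat -> C) :
  Cconj (Csum m f) = Csum m (fun j => Cconj (f j)).
Proof.
  induction m; [apply injective_projections; simpl; lra|].
  rewrite !Csum_S, <- IHm. apply injective_projections; simpl; lra.
Qed.

Lemma Csum_mul_Csum (m : nat) (f g : nat -> C) :
  (Csum m f * Csum m g)%C = Csum m (fun j => Csum m (fun k => f j * g k))%C.
Proof.
  rewrite (Csum_ext m (fun j => Csum m (fun k => f j * g k))%C (fun j => Csum m g * f j)%C).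
  - rewrite Csum_mull. cring.
  - intros j _. rewrite Csum_mull. cring.
Qed.

Lemma Csum_comm (m p : nat) (f : nat -> nat -> C) :
  Csum m (fun j => Csum p (fun k => f j k)) = Csum p (fun k => Csum m (fun j => f j k)).
Proof.
  induction m.
  - symmetry. apply Csum_eq0. reflexivity.
  - rewrite Csum_S, IHm, <- Csum_add. reflexivity.
Qed.

Lemma fst_Csum (m : nat) (f : nat -> C) : fst (Csum m f) = Rsum m (fun j => fst (f j)).
Proof. induction m; [reflexivity|]. rewrite Csum_S; simpl; rewrite IHm; reflexivity. Qed.

Lemma snd_Csum (m : nat) (f : nat -> C) : snd (Csum m f) = Rsum m (fun j => snd (f j)).
Proof. induction m; [reflexivity|]. rewrite Csum_S; simpl; rewrite IHm; reflexivity. Qed.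

Lemma Rsum_S (m : nat) (f : nat -> R) : Rsum (S m) f = Rsum m f + f m.
Proof. reflexivity. Qed.

Lemma Rsum_ext (m : nat) (f g : nat -> R) :
  (forall j, (j < m)%nat -> f j = g j) -> Rsum m f = Rsum m g.
Proof.
  revert f g; induction m; intros f g H; simpl; auto.
  rewrite (IHm f g) by (intros; apply H; lia). rewrite (H m) by lia. reflexivity.
Qed.

Lemma Rsum_add (m : nat) (f g : nat -> R) : Rsum m (fun j => f j + g j) = Rsum m f + Rsum m g.
Proof. induction m; simpl. lra. rewrite IHm. lra. Qed.

Lemma Rsum_mulr (m : nat) (c : R) (f : nat -> R) : Rsum m (fun j => f j * c) = Rsum m f * c.
Proof. induction m; simpl. lra. rewrite IHm. lra. Qed.

Lemma Rsum_le (m : nat) (f g : nat -> R) :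
  (forall j, (j < m)%nat -> f j <= g j) -> Rsum m f <= Rsum m g.
Proof.
  revert f g; induction m; intros f g H; simpl. lra.
  assert (Rsum m f <= Rsum m g) by (apply IHm; intros; apply H; lia).
  specialize (H m ltac:(lia)). lra.
Qed.

Lemma Rsum_nonneg (m : nat) (f : nat -> R) :
  (forall j, (j < m)%nat -> 0 <= f j) -> 0 <= Rsum m f.
Proof.
  intros H. replace 0 with (Rsum m (fun _ => 0)) by (clear; induction m; simpl; lra).
  now apply Rsum_le.
Qed.

Lemma Rabs_Rsum_le (m : nat) (f : nat -> R) : Rabs (Rsum m f) <= Rsum m (fun j => Rabs (f j)).
Proof.
  induction m; simpl. rewrite Rabs_R0; lra.
  eapply Rle_trans. apply Rabs_triang. lra.
Qed.

Lemma le_of_quadratic_nonneg (A X Y : R) :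
  (forall t, 0 <= A - 2 * t * X + t ^ 2 * X * Y) -> 0 <= X -> 0 <= Y -> X <= A * Y.
Proof.
  intros H HX HY.
  destruct (Req_dec Y 0) as [->|HY0].
  - destruct (Req_dec X 0) as [->|HX0]; [lra|].
    specialize (H ((A + 1) / (2 * X))).
    replace (A - 2 * ((A + 1) / (2 * X)) * X + ((A + 1) / (2 * X)) ^ 2 * X * 0) with (-1)
      in H by (field; lra). lra.
  - specialize (H (1 / Y)).
    replace (A - 2 * (1 / Y) * X + (1 / Y) ^ 2 * X * Y) with ((A * Y - X) / Y) in H
      by (field; lra).
    assert (0 <= (A * Y - X) / Y * Y) by (apply Rmult_le_pos; lra).
    replace ((A * Y - X) / Y * Y) with (A * Y - X) in H0 by (field; lra). lra.
Qed.

Lemma sqr_sqrt_add_le (X P Q al be G H : R) :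
  0 <= P -> 0 <= Q -> 0 <= al -> 0 <= be -> 0 <= G -> 0 <= H ->
  X <= (sqrt P + sqrt Q) ^ 2 -> P <= al * G -> Q <= be * H -> X <= (al + be) * (G + H).
Proof.
  intros HP HQ Ha Hb HG HH HX H1 H2.
  assert (S1 : sqrt P <= sqrt al * sqrt G)
    by (rewrite <- sqrt_mult by auto; now apply sqrt_le_1_alt).
  assert (S2 : sqrt Q <= sqrt be * sqrt H)
    by (rewrite <- sqrt_mult by auto; now apply sqrt_le_1_alt).
  pose proof (sqrt_positivity P HP). pose proof (sqrt_positivity Q HQ).
  rewrite <- (sqrt_sqrt al), <- (sqrt_sqrt be), <- (sqrt_sqrt G), <- (sqrt_sqrt H) by auto.
  pose proof (sqrt_positivity al Ha). pose proof (sqrt_positivity be Hb).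
  pose proof (sqrt_positivity G HG). pose proof (sqrt_positivity H HH).
  set (ra := sqrt al) in *. set (rb := sqrt be) in *.
  set (rg := sqrt G) in *. set (rh := sqrt H) in *.
  assert ((ra * ra + rb * rb) * (rg * rg + rh * rh) - (ra * rg + rb * rh) ^ 2
          = (ra * rh - rb * rg) ^ 2) by ring.
  assert (0 <= (ra * rh - rb * rg) ^ 2) by apply pow2_ge_0.
  assert ((sqrt P + sqrt Q) ^ 2 <= (ra * rg + rb * rh) ^ 2) by nra.
  lra.
Qed.

Lemma le_mul_of_le_sqrt_mul_self (X A B : R) :
  0 <= X -> 0 <= A -> 0 <= B -> X <= sqrt A * sqrt (B * X) -> X <= A * B.
Proof.
  intros HX HA HB H.
  rewrite <- sqrt_mult in H by nra.
  assert (0 <= A * (B * X)) by (apply Rmult_le_pos; nra).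
  assert (X * X <= A * (B * X)).
  { rewrite <- (sqrt_sqrt (A * (B * X))) by auto.
    pose proof (sqrt_positivity (A * (B * X)) H0). nra. }
  destruct (Req_dec X 0) as [->|HX0]; nra.
Qed.

Lemma Cnorm2_nonneg (z : C) : 0 <= Cnorm2 z.
Proof. destruct z as [a b]. unfold Cnorm2, Re, Im; simpl. nra. Qed.

Lemma Cnorm2_mul (z w : C) : Cnorm2 (z * w)%C = Cnorm2 z * Cnorm2 w.
Proof. destruct z as [a b], w as [c d]. unfold Cnorm2, Re, Im; simpl. ring. Qed.

Lemma Cnorm2_sqr_Cmod (z : C) : Cnorm2 z = Cmod z ^ 2.
Proof. unfold Cmod. rewrite pow2_sqrt; [reflexivity|apply Cnorm2_nonneg]. Qed.

Lemma Re_mul_conj_le (z w : C) : fst (z * Cconj w)%C <= Cmod z * Cmod w.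
Proof.
  eapply Rle_trans; [apply Rle_abs|]. eapply Rle_trans; [apply re_le_Cmod|].
  rewrite Cmod_mult, Cmod_conj. apply Rle_refl.
Qed.

Lemma Cnorm2_add_le (z w : C) : Cnorm2 (z + w)%C <= (Cmod z + Cmod w) ^ 2.
Proof.
  rewrite Cnorm2_sqr_Cmod.
  assert (T : Cmod (z + w)%C <= Cmod z + Cmod w) by apply Cmod_triangle.
  assert (P : 0 <= Cmod (z + w)%C) by apply Cmod_ge_0.
  nra.
Qed.

Definition vadd (a b : nat -> C) : nat -> C := fun j => (a j + b j)%C.
Definition vscal (c : C) (a : nat -> C) : nat -> C := fun j => (c * a j)%C.
Definition vsub (a b : nat -> C) : nat -> C := vadd a (vscal (RtoC (-1)) b).
Definition vdiag (lam a : nat -> C) : nat -> C := fun j => (lam j * a j)%C.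
Definition unitv (m : nat) : nat -> C := fun j => if Nat.eq_dec j m then RtoC 1 else RtoC 0.

(* The flag V_0 <= V_1 <= ... <= V_n = C^n: [supp_lt n m a] says a is in V_m. *)
Definition supp_lt (n m : nat) (a : nat -> C) : Prop :=
  forall j, (m <= j)%nat -> (j < n)%nat -> a j = RtoC 0.

Section SemiInnerProduct.

Variable n : nat.
Variable B : (nat -> C) -> (nat -> C) -> C.
Hypothesis B_addl : forall a a' b, B (vadd a a') b = (B a b + B a' b)%C.
Hypothesis B_scall : forall c a b, B (vscal c a) b = (c * B a b)%C.
Hypothesis B_conj_sym : forall a b, B b a = Cconj (B a b).
Hypothesis B_supp0 : forall a b, supp_lt n 0 a -> B a b = RtoC 0.
Hypothesis B_psd : forall a, 0 <= fst (B a a).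

Definition snorm2 (a : nat -> C) : R := fst (B a a).

Lemma B_addr a b b' : B a (vadd b b') = (B a b + B a b')%C.
Proof. rewrite (B_conj_sym (vadd b b') a), B_addl, Cplus_conj, <- !B_conj_sym. reflexivity. Qed.

Lemma B_scalr c a b : B a (vscal c b) = (Cconj c * B a b)%C.
Proof. rewrite (B_conj_sym (vscal c b) a), B_scall, Cmult_conj, <- !B_conj_sym. reflexivity. Qed.

Lemma B_self a : B a a = RtoC (snorm2 a).
Proof.
  pose proof (B_conj_sym a a) as H. unfold snorm2.
  destruct (B a a) as [x y]. apply (f_equal snd) in H. simpl in H.
  apply injective_projections; simpl; lra.
Qed.

Lemma B_orth_sym u h : B u h = RtoC 0 -> B h u = RtoC 0.
Proof. intros H. rewrite B_conj_sym, H. apply injective_projections; simpl; lra. Qed.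

Lemma B_add_scal2 a k b c l d :
  B (vadd a (vscal k b)) (vadd c (vscal l d)) =
  (B a c + Cconj l * B a d + k * B b c + k * Cconj l * B b d)%C.
Proof. rewrite B_addl, !B_addr, B_scall, !B_scalr, B_scall. cring. Qed.

Lemma snorm2_add_scal a k b :
  snorm2 (vadd a (vscal k b)) = snorm2 a + 2 * fst (Cconj k * B a b)%C + Cnorm2 k * snorm2 b.
Proof.
  unfold snorm2 at 1. rewrite B_add_scal2, (B_conj_sym a b), (B_self a), (B_self b).
  destruct (B a b) as [c1 c2], k as [k1 k2]. unfold Cnorm2, Re, Im. simpl. ring.
Qed.

Lemma snorm2_scal c a : snorm2 (vscal c a) = Cnorm2 c * snorm2 a.
Proof.
  unfold snorm2. rewrite B_scall, B_scalr, (B_self a).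
  destruct c as [c1 c2]. unfold Cnorm2, Re, Im. simpl. ring.
Qed.

Lemma B_cauchy_schwarz a b : Cnorm2 (B a b) <= snorm2 a * snorm2 b.
Proof.
  apply le_of_quadratic_nonneg; [|apply Cnorm2_nonneg|apply B_psd].
  intros t. pose proof (B_psd (vadd a (vscal (RtoC (- t) * B a b)%C b))) as H.
  fold (snorm2 (vadd a (vscal (RtoC (- t) * B a b)%C b))) in H.
  rewrite snorm2_add_scal in H. destruct (B a b) as [c1 c2].
  unfold Cnorm2, Re, Im in *; simpl in *. nra.
Qed.

Lemma B_eq0_of_snorm2_eq0 a b : snorm2 b = 0 -> B a b = RtoC 0.
Proof.
  intros H. pose proof (B_cauchy_schwarz a b) as CS. rewrite H, Rmult_0_r in CS.
  destruct (B a b) as [c1 c2]. unfold Cnorm2, Re, Im in CS; simpl in CS.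
  apply injective_projections; simpl; nra.
Qed.

Lemma snorm2_add_orth g u c :
  B g u = RtoC 0 -> snorm2 (vadd g (vscal c u)) = snorm2 g + Cnorm2 c * snorm2 u.
Proof. intros H. rewrite snorm2_add_scal, H. simpl. ring. Qed.

Lemma snorm2_add_le a b : snorm2 (vadd a b) <= (sqrt (snorm2 a) + sqrt (snorm2 b)) ^ 2.
Proof.
  replace (vadd a b) with (vadd a (vscal (RtoC 1) b))
    by (apply functional_extensionality; intros; unfold vadd, vscal; cring).
  rewrite snorm2_add_scal.
  replace (Cconj (RtoC 1) * B a b)%C with (B a b) by (apply injective_projections; simpl; ring).
  replace (Cnorm2 (RtoC 1)) with 1 by (unfold Cnorm2, Re, Im; simpl; ring).
  assert (CS : Cmod (B a b) <= sqrt (snorm2 a) * sqrt (snorm2 b)).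
  { rewrite <- sqrt_mult by apply B_psd. apply sqrt_le_1_alt, B_cauchy_schwarz. }
  pose proof (Rle_trans _ _ _ (Rle_abs _) (re_le_Cmod (B a b))).
  pose proof (sqrt_sqrt _ (B_psd a)). pose proof (sqrt_sqrt _ (B_psd b)).
  change (fst (B a b) <= Cmod (B a b)) in H. fold (snorm2 a) (snorm2 b) in *. nra.
Qed.

Lemma supp_lt_add m a b : supp_lt n m a -> supp_lt n m b -> supp_lt n m (vadd a b).
Proof. unfold supp_lt, vadd; intros Ha Hb j ? ?. rewrite Ha, Hb by auto. cring. Qed.

Lemma supp_lt_scal m c a : supp_lt n m a -> supp_lt n m (vscal c a).
Proof. unfold supp_lt, vscal; intros Ha j ? ?. rewrite Ha by auto. cring. Qed.

Lemma supp_lt_le m m' a : (m <= m')%nat -> supp_lt n m a -> supp_lt n m' a.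
Proof. unfold supp_lt; intros ? Ha j ? ?. apply Ha; lia. Qed.

Lemma supp_lt_unitv m : supp_lt n (S m) (unitv m).
Proof. unfold supp_lt, unitv; intros j ? ?. destruct (Nat.eq_dec j m); [lia|reflexivity]. Qed.

Lemma supp_lt_full a : supp_lt n n a.
Proof. unfold supp_lt; intros; lia. Qed.

Lemma snorm2_supp0 a : supp_lt n 0 a -> snorm2 a = 0.
Proof. intros H. unfold snorm2. rewrite B_supp0; auto. Qed.

Lemma supp_lt_S_decomp m p h : supp_lt n m p -> supp_lt n (S m) h ->
  exists g, supp_lt n m g /\ h = vadd g (vscal (h m) (vsub (unitv m) p)).
Proof.
  intros Hp Hh.
  exists (vadd (fun j => if Nat.eq_dec j m then RtoC 0 else h j) (vscal (h m) p)). split.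
  - apply supp_lt_add; [|now apply supp_lt_scal].
    intros j Hj Hjn. destruct (Nat.eq_dec j m); [reflexivity|]. apply Hh; lia.
  - apply functional_extensionality; intros j. unfold vsub, vadd, vscal, unitv.
    destruct (Nat.eq_dec j m) as [->|Hne]; cring.
Qed.

(* Gram-Schmidt along the flag; vectors of seminorm zero are orthogonal to everything, so
   no positive definiteness is needed. *)
Lemma orth_proj_exists m : (m <= n)%nat -> forall x, exists p, supp_lt n m p /\
  forall h, supp_lt n m h -> B (vsub x p) h = RtoC 0.
Proof.
  induction m as [|m IHm]; intros Hm x.
  - exists (fun _ => RtoC 0). split; [intros j _ _; reflexivity|].
    intros h Hh. now apply B_orth_sym, B_supp0.
  - destruct (IHm ltac:(lia) (unitv m)) as [pm [Hpm Opm]].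
    set (u := vsub (unitv m) pm).
    destruct (IHm ltac:(lia) x) as [p [Hp Op]].
    destruct (Req_dec (snorm2 u) 0) as [Hz|Hnz].
    + exists p. split; [apply supp_lt_le with m; auto|].
      intros h Hh. destruct (supp_lt_S_decomp m pm h Hpm Hh) as [g [Hg ->]].
      rewrite B_addr, B_scalr, Op by auto. fold u. rewrite (B_eq0_of_snorm2_eq0 _ _ Hz). cring.
    + set (k := (B (vsub x p) u * Cinv (RtoC (snorm2 u)))%C).
      exists (vadd p (vscal k u)). split.
      * apply supp_lt_add; [apply supp_lt_le with m; auto|].
        apply supp_lt_scal, supp_lt_add; [apply supp_lt_unitv|].
        apply supp_lt_scal, supp_lt_le with m; auto.
      * intros h Hh. destruct (supp_lt_S_decomp m pm h Hpm Hh) as [g [Hg ->]]. fold u.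
        replace (vsub x (vadd p (vscal k u))) with (vadd (vsub x p) (vscal (- k)%C u))
          by (apply functional_extensionality; intros j; unfold vsub, vadd, vscal; cring).
        rewrite B_add_scal2, Op, Opm, B_self by auto. unfold k.
        assert (RtoC (snorm2 u) <> RtoC 0) by (intros E; apply (f_equal fst) in E; simpl in E; lra).
        field. auto.
Qed.

Lemma flag_orth_step m : (m < n)%nat -> exists u, supp_lt n (S m) u /\
  (forall h, supp_lt n m h -> B u h = RtoC 0) /\
  (forall f, supp_lt n (S m) f -> exists g, supp_lt n m g /\ f = vadd g (vscal (f m) u)).
Proof.
  intros Hm. destruct (orth_proj_exists m ltac:(lia) (unitv m)) as [pm [Hpm Opm]].
  exists (vsub (unitv m) pm). split; [|split].
  - apply supp_lt_add; [apply supp_lt_unitv|]. apply supp_lt_scal, supp_lt_le with m; auto.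
  - exact Opm.
  - intros f Hf. now apply supp_lt_S_decomp.
Qed.

Variable lam : nat -> C.
Hypothesis lam_re : forall j, (j < n)%nat -> - / 2 < fst (lam j).
Hypothesis B_lyapunov : forall a b,
  (B (vdiag lam a) b + B a (vdiag lam b) + B a b)%C = (Csum n a * Cconj (Csum n b))%C.

Lemma wt_pos j : (j < n)%nat -> 0 < wt lam j.
Proof. intros Hj. unfold wt, Re. pose proof (lam_re j Hj). lra. Qed.

Lemma Rsum_wt_nonneg m : (m <= n)%nat -> 0 <= Rsum m (wt lam).
Proof. intros Hm. apply Rsum_nonneg. intros j Hj. apply Rlt_le, wt_pos. lia. Qed.

Lemma supp_lt_vdiag m a : supp_lt n m a -> supp_lt n m (vdiag lam a).
Proof. unfold supp_lt, vdiag; intros Ha j ? ?. rewrite Ha by auto. cring. Qed.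

Lemma Csum_supp0 a : supp_lt n 0 a -> Csum n a = RtoC 0.
Proof. intros Ha. apply Csum_eq0. intros j Hj. apply Ha; lia. Qed.

Definition vdiag_shift (m : nat) (u : nat -> C) : nat -> C :=
  vadd (vdiag lam u) (vscal (- lam m)%C u).

Lemma supp_lt_vdiag_shift m u : supp_lt n (S m) u -> supp_lt n m (vdiag_shift m u).
Proof.
  intros Hu j Hj Hjn. unfold vdiag_shift, vadd, vscal, vdiag.
  destruct (Nat.eq_dec j m) as [->|Hne]; [cring|]. rewrite Hu by lia. cring.
Qed.

Lemma vdiag_eq_shift m u : vdiag lam u = vadd (vscal (lam m) u) (vdiag_shift m u).
Proof.
  apply functional_extensionality; intros j. unfold vdiag_shift, vadd, vscal, vdiag. cring.
Qed.

Section OrthStep.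

Variables (m : nat) (u : nat -> C).
Hypothesis m_lt : (m < n)%nat.
Hypothesis u_supp : supp_lt n (S m) u.
Hypothesis u_orth : forall h, supp_lt n m h -> B u h = RtoC 0.

Lemma Cnorm2_Csum_orth : Cnorm2 (Csum n u) = wt lam m * snorm2 u.
Proof.
  pose proof (B_lyapunov u u) as I.
  assert (E : B (vdiag lam u) u = (lam m * RtoC (snorm2 u))%C).
  { rewrite (vdiag_eq_shift m u), B_addl, B_scall, B_self.
    rewrite (B_orth_sym u (vdiag_shift m u)) by (apply u_orth, supp_lt_vdiag_shift; auto).
    cring. }
  rewrite (B_conj_sym (vdiag lam u) u), E, B_self in I.
  apply (f_equal fst) in I.
  unfold wt, Cnorm2, Re, Im. destruct (Csum n u) as [s1 s2], (lam m) as [l1 l2].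
  simpl in *. nra.
Qed.

Lemma snorm2_vdiag_shift_le :
  (forall g, supp_lt n m g -> Cnorm2 (Csum n g) <= Rsum m (wt lam) * snorm2 g) ->
  snorm2 (vdiag_shift m u) <= wt lam m * Rsum m (wt lam) * snorm2 u.
Proof.
  intros Hsum. set (b := vdiag_shift m u).
  assert (Hb : supp_lt n m b) by (apply supp_lt_vdiag_shift; auto).
  pose proof (B_lyapunov u b) as I.
  rewrite (u_orth (vdiag lam b)) in I by (apply supp_lt_vdiag; auto).
  rewrite (u_orth b) in I by auto.
  assert (E : B b b = B (vdiag lam u) b).
  { unfold b at 1, vdiag_shift. rewrite B_addl, B_scall. fold b. rewrite (u_orth b Hb). cring. }
  (* ||b||^2 = Re (sigma(u) conj sigma(b)), so Cauchy-Schwarz bounds it by a multiple of ||b|| *)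
  assert (E2 : snorm2 b = fst (Csum n u * Cconj (Csum n b))%C).
  { unfold snorm2. rewrite E, <- I. simpl. ring. }
  pose proof (Re_mul_conj_le (Csum n u) (Csum n b)) as L.
  rewrite <- E2 in L. unfold Cmod in L. rewrite Cnorm2_Csum_orth in L.
  assert (0 <= wt lam m * snorm2 u)
    by (apply Rmult_le_pos; [apply Rlt_le, wt_pos, m_lt|apply B_psd]).
  replace (wt lam m * Rsum m (wt lam) * snorm2 u)
    with ((wt lam m * snorm2 u) * Rsum m (wt lam)) by ring.
  apply le_mul_of_le_sqrt_mul_self; [apply B_psd|auto|apply Rsum_wt_nonneg; lia|].
  eapply Rle_trans; [apply L|]. apply Rmult_le_compat_l; [apply sqrt_positivity; auto|].
  apply sqrt_le_1_alt, Hsum, Hb.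
Qed.

End OrthStep.

Lemma Cnorm2_Csum_le m : (m <= n)%nat -> forall g, supp_lt n m g ->
  Cnorm2 (Csum n g) <= Rsum m (wt lam) * snorm2 g.
Proof.
  induction m as [|m IHm]; intros Hm g Hg.
  - rewrite Csum_supp0, snorm2_supp0 by auto. unfold Cnorm2, Re, Im; simpl. lra.
  - destruct (flag_orth_step m ltac:(lia)) as [u [Hu [Ou Du]]].
    destruct (Du g Hg) as [g' [Hg' ->]].
    rewrite snorm2_add_orth by (apply B_orth_sym, Ou; auto).
    unfold vadd at 1, vscal at 1. rewrite Csum_add, Csum_mull, Rsum_S.
    apply sqr_sqrt_add_le with (P := Cnorm2 (Csum n g')) (Q := Cnorm2 (g m * Csum n u)%C);
      try apply Cnorm2_nonneg.
    + apply Rsum_wt_nonneg; lia.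
    + apply Rlt_le, wt_pos; lia.
    + apply B_psd.
    + apply Rmult_le_pos; [apply Cnorm2_nonneg|apply B_psd].
    + apply Cnorm2_add_le.
    + apply IHm; auto; lia.
    + rewrite Cnorm2_mul, (Cnorm2_Csum_orth m u) by (auto; lia). nra.
Qed.

Definition wt_pair_sum (m : nat) : R := Rsum m (fun j => wt lam j * Rsum j (wt lam)).

Lemma wt_pair_sum_nonneg m : (m <= n)%nat -> 0 <= wt_pair_sum m.
Proof.
  intros Hm. apply Rsum_nonneg. intros j Hj.
  apply Rmult_le_pos; [apply Rlt_le, wt_pos|apply Rsum_wt_nonneg]; lia.
Qed.

Lemma maxmod_nonneg m : 0 <= maxmod m lam.
Proof. induction m; simpl; [lra|]. eapply Rle_trans; [apply IHm|apply Rmax_l]. Qed.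

Lemma vdiag_split m : (m <= n)%nat -> forall f, supp_lt n m f ->
  exists p q, supp_lt n m p /\ vdiag lam f = vadd p q /\
    snorm2 p <= maxmod m lam ^ 2 * snorm2 f /\ snorm2 q <= wt_pair_sum m * snorm2 f.
Proof.
  induction m as [|m IHm]; intros Hm f Hf.
  - exists (fun _ => RtoC 0), (vdiag lam f). split; [|split; [|split]].
    + intros j _ _. reflexivity.
    + apply functional_extensionality; intros; unfold vadd. cring.
    + rewrite snorm2_supp0 by (intros j _ _; reflexivity). simpl. lra.
    + rewrite snorm2_supp0 by (apply supp_lt_vdiag; auto). unfold wt_pair_sum; simpl. lra.
  - destruct (flag_orth_step m ltac:(lia)) as [u [Hu [Ou Du]]].
    destruct (Du f Hf) as [g [Hg Ef]].
    destruct (IHm ltac:(lia) g Hg) as [p [q [Hp [Eg [Np Nq]]]]].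
    set (c := f m) in *.
    assert (Hpyth : snorm2 f = snorm2 g + Cnorm2 c * snorm2 u)
      by (rewrite Ef; apply snorm2_add_orth, B_orth_sym, Ou; auto).
    exists (vadd p (vscal (c * lam m)%C u)), (vadd q (vscal c (vdiag_shift m u))).
    split; [|split; [|split]].
    + apply supp_lt_add; [apply supp_lt_le with m; auto|]. apply supp_lt_scal; auto.
    + rewrite Ef. apply functional_extensionality; intros j.
      pose proof (equal_f Eg j) as Ej. unfold vdiag_shift, vdiag, vadd, vscal in *.
      transitivity (lam j * g j + c * (lam j * u j))%C; [cring|]. rewrite Ej. cring.
    + rewrite snorm2_add_orth, Cnorm2_mul, Hpyth by (apply B_orth_sym, Ou; auto).
      assert (M1 : maxmod m lam ^ 2 <= maxmod (S m) lam ^ 2).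
      { pose proof (maxmod_nonneg m). assert (maxmod m lam <= maxmod (S m) lam) by apply Rmax_l.
        nra. }
      assert (M2 : Cnorm2 (lam m) <= maxmod (S m) lam ^ 2).
      { rewrite Cnorm2_sqr_Cmod. assert (0 <= Cmod (lam m)) by apply Cmod_ge_0.
        assert (Cmod (lam m) <= maxmod (S m) lam) by apply Rmax_r. nra. }
      pose proof (B_psd g). pose proof (B_psd u). pose proof (Cnorm2_nonneg c).
      fold (snorm2 g) (snorm2 u) in *.
      assert (0 <= Cnorm2 c * snorm2 u) by nra.
      nra.
    + rewrite Hpyth. unfold wt_pair_sum. rewrite Rsum_S. fold (wt_pair_sum m).
      apply sqr_sqrt_add_le with (P := snorm2 q) (Q := snorm2 (vscal c (vdiag_shift m u)));
        try apply B_psd.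
      * apply wt_pair_sum_nonneg; lia.
      * apply Rmult_le_pos; [apply Rlt_le, wt_pos|apply Rsum_wt_nonneg]; lia.
      * apply Rmult_le_pos; [apply Cnorm2_nonneg|apply B_psd].
      * apply snorm2_add_le.
      * exact Nq.
      * rewrite snorm2_scal.
        pose proof (snorm2_vdiag_shift_le m u ltac:(lia) Hu Ou (Cnorm2_Csum_le m ltac:(lia))).
        pose proof (Cnorm2_nonneg c). nra.
Qed.

Lemma snorm2_vdiag_le a :
  snorm2 (vdiag lam a) <= (maxmod n lam + sqrt (wt_pair_sum n)) ^ 2 * snorm2 a.
Proof.
  destruct (vdiag_split n (le_n n) a (supp_lt_full a)) as [p [q [_ [E [Np Nq]]]]].
  rewrite E. eapply Rle_trans; [apply snorm2_add_le|].
  pose proof (maxmod_nonneg n) as HM. pose proof (B_psd a) as Ha. fold (snorm2 a) in Ha.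
  pose proof (wt_pair_sum_nonneg n (le_n n)) as HF.
  assert (S1 : sqrt (snorm2 p) <= maxmod n lam * sqrt (snorm2 a)).
  { rewrite <- (sqrt_pow2 (maxmod n lam)) by auto. rewrite <- sqrt_mult by nra.
    now apply sqrt_le_1_alt. }
  assert (S2 : sqrt (snorm2 q) <= sqrt (wt_pair_sum n) * sqrt (snorm2 a)).
  { rewrite <- sqrt_mult by auto. now apply sqrt_le_1_alt. }
  pose proof (sqrt_positivity _ (B_psd p)). pose proof (sqrt_positivity _ (B_psd q)).
  pose proof (sqrt_positivity _ HF). pose proof (sqrt_sqrt _ Ha).
  replace ((maxmod n lam + sqrt (wt_pair_sum n)) ^ 2 * snorm2 a) with
    ((maxmod n lam * sqrt (snorm2 a) + sqrt (wt_pair_sum n) * sqrt (snorm2 a)) ^ 2)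
    by (rewrite <- H2 at 3; ring).
  fold (snorm2 p) (snorm2 q) in *. nra.
Qed.

End SemiInnerProduct.

Section GramForm.

Variables (n : nat) (lam : nat -> C).
Hypothesis lam_re : forall j, (j < n)%nat -> - / 2 < fst (lam j).

Definition gram_den (j k : nat) : C := (1 + lam j + Cconj (lam k))%C.

Definition gram (a b : nat -> C) : C :=
  Csum n (fun j => Csum n (fun k => a j * Cconj (b k) * / gram_den j k))%C.

Lemma gram_den_neq0 j k : (j < n)%nat -> (k < n)%nat -> gram_den j k <> RtoC 0.
Proof.
  intros Hj Hk H. apply (f_equal fst) in H. unfold gram_den in H; simpl in H.
  pose proof (lam_re j Hj); pose proof (lam_re k Hk). lra.
Qed.

Lemma gram_addl a a' b : gram (vadd a a') b = (gram a b + gram a' b)%C.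
Proof.
  unfold gram. rewrite <- Csum_add. apply Csum_ext; intros.
  rewrite <- Csum_add. apply Csum_ext; intros. unfold vadd. cring.
Qed.

Lemma gram_scall c a b : gram (vscal c a) b = (c * gram a b)%C.
Proof.
  unfold gram. rewrite <- Csum_mull. apply Csum_ext; intros.
  rewrite <- Csum_mull. apply Csum_ext; intros. unfold vscal. cring.
Qed.

Lemma gram_conj_sym a b : gram b a = Cconj (gram a b).
Proof.
  unfold gram. rewrite Csum_comm, Csum_conj. apply Csum_ext; intros k Hk.
  rewrite Csum_conj. apply Csum_ext; intros j Hj.
  rewrite !Cmult_conj, Cconj_conj, Cinv_conj by (apply gram_den_neq0; auto).
  replace (Cconj (gram_den k j)) with (gram_den j k)
    by (unfold gram_den; apply injective_projections; simpl; lra).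
  cring.
Qed.

Lemma gram_supp0 a b : supp_lt n 0 a -> gram a b = RtoC 0.
Proof.
  intros Ha. apply Csum_eq0; intros j Hj. apply Csum_eq0; intros k Hk.
  rewrite Ha by lia. cring.
Qed.

Lemma gram_lyapunov a b :
  (gram (vdiag lam a) b + gram a (vdiag lam b) + gram a b)%C = (Csum n a * Cconj (Csum n b))%C.
Proof.
  rewrite Csum_conj, Csum_mul_Csum. unfold gram.
  rewrite <- !Csum_add. apply Csum_ext; intros j Hj.
  rewrite <- !Csum_add. apply Csum_ext; intros k Hk.
  unfold vdiag. rewrite Cmult_conj.
  transitivity (a j * Cconj (b k) * (gram_den j k * / gram_den j k))%C; [unfold gram_den; cring|].
  rewrite Cinv_r by (apply gram_den_neq0; auto). cring.
Qed.

End GramForm.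

Lemma cpow_fst x l : fst (cpow x l) = exp (fst l * ln x) * cos (snd l * ln x).
Proof.
  unfold cpow, Cexp, Defs.Cmult, Re, Im; simpl.
  rewrite Rmult_0_r, Rminus_0_r, Rmult_0_r, Rplus_0_l. reflexivity.
Qed.

Lemma cpow_snd x l : snd (cpow x l) = exp (fst l * ln x) * sin (snd l * ln x).
Proof.
  unfold cpow, Cexp, Defs.Cmult, Re, Im; simpl.
  rewrite Rmult_0_r, Rminus_0_r, Rmult_0_r, Rplus_0_l. reflexivity.
Qed.

Lemma cpow_add x l l' : cpow x (l + l')%C = (cpow x l * cpow x l')%C.
Proof.
  apply injective_projections; unfold Coquelicot.Complex.Cmult, Coquelicot.Complex.Cplus;
    cbn [fst snd]; rewrite ?cpow_fst, ?cpow_snd; cbn [fst snd];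
    rewrite !Rmult_plus_distr_r, exp_plus; [rewrite cos_plus|rewrite sin_plus]; ring.
Qed.

Lemma cpow_conj x l : Cconj (cpow x l) = cpow x (Cconj l).
Proof.
  apply injective_projections; unfold Cconj; cbn [fst snd]; rewrite ?cpow_fst, ?cpow_snd;
    cbn [fst snd]; replace (- snd l * ln x) with (- (snd l * ln x)) by ring;
    [rewrite cos_neg|rewrite sin_neg]; ring.
Qed.

Lemma cpow_1_l l : cpow 1 l = RtoC 1.
Proof.
  apply injective_projections; rewrite ?cpow_fst, ?cpow_snd, ln_1, !Rmult_0_r, exp_0;
    [rewrite cos_0|rewrite sin_0]; simpl; ring.
Qed.

Lemma cpow_1_r x : 0 < x -> cpow x (RtoC 1) = RtoC x.
Proof.
  intros Hx. apply injective_projections; rewrite ?cpow_fst, ?cpow_snd; simpl;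
    rewrite Rmult_0_l, Rmult_1_l, exp_ln by auto; [rewrite cos_0|rewrite sin_0]; ring.
Qed.

Lemma Cmod_cpow x l : Cmod (cpow x l) = exp (fst l * ln x).
Proof.
  unfold Cmod, Cnorm2, Re, Im. rewrite cpow_fst, cpow_snd.
  set (E := exp (fst l * ln x)). set (t := snd l * ln x).
  replace ((E * cos t) ^ 2 + (E * sin t) ^ 2) with (E ^ 2 * (sin t ^ 2 + cos t ^ 2)) by ring.
  rewrite <- !Rsqr_pow2, sin2_cos2, Rmult_1_r, sqrt_Rsqr; [reflexivity|apply Rlt_le, exp_pos].
Qed.

Lemma is_derive_fst_cpow c l x : 0 < x ->
  is_derive (fun t => fst (c * cpow t l)%C) x (fst (c * l * cpow x l)%C / x).
Proof.
  intros Hx. destruct c as [c1 c2], l as [l1 l2].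
  apply is_derive_ext with (fun t => c1 * (exp (l1 * ln t) * cos (l2 * ln t))
                                   - c2 * (exp (l1 * ln t) * sin (l2 * ln t))).
  { intros t. unfold Coquelicot.Complex.Cmult. cbn [fst snd]. now rewrite cpow_fst, cpow_snd. }
  auto_derive; [lra|]. unfold Coquelicot.Complex.Cmult. cbn [fst snd].
  rewrite cpow_fst, cpow_snd. cbn [fst snd]. field. lra.
Qed.

Lemma is_derive_snd_cpow c l x : 0 < x ->
  is_derive (fun t => snd (c * cpow t l)%C) x (snd (c * l * cpow x l)%C / x).
Proof.
  intros Hx. destruct c as [c1 c2], l as [l1 l2].
  apply is_derive_ext with (fun t => c1 * (exp (l1 * ln t) * sin (l2 * ln t))
                                   + c2 * (exp (l1 * ln t) * cos (l2 * ln t))).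
  { intros t. unfold Coquelicot.Complex.Cmult. cbn [fst snd]. now rewrite cpow_fst, cpow_snd. }
  auto_derive; [lra|]. unfold Coquelicot.Complex.Cmult. cbn [fst snd].
  rewrite cpow_fst, cpow_snd. cbn [fst snd]. field. lra.
Qed.

Lemma is_derive_Rsum (m : nat) (F : nat -> R -> R) (F' : nat -> R) (x : R) :
  (forall j, (j < m)%nat -> is_derive (F j) x (F' j)) ->
  is_derive (fun t => Rsum m (fun j => F j t)) x (Rsum m F').
Proof.
  induction m; intros H.
  - apply (is_derive_const (K := R_AbsRing) (V := R_NormedModule) 0).
  - apply (is_derive_plus (fun t => Rsum m (fun j => F j t)) (F m)).
    + apply IHm. intros; apply H; lia.
    + apply H; lia.
Qed.

Lemma exists_uniform_lower_bound (m : nat) (r : nat -> R) :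
  (forall j, (j < m)%nat -> 0 < r j) -> exists rho, 0 < rho /\ forall j, (j < m)%nat -> rho <= r j.
Proof.
  induction m as [|m IHm]; intros Hr.
  - exists 1. split; [lra|]. intros; lia.
  - destruct IHm as [rho [Hrho Hle]]; [intros; apply Hr; lia|].
    exists (Rmin rho (r m)). split; [apply Rmin_glb_lt; auto; apply Hr; lia|].
    intros j Hj. destruct (Nat.eq_dec j m) as [->|Hne]; [apply Rmin_r|].
    eapply Rle_trans; [apply Rmin_l|apply Hle; lia].
Qed.

Lemma exp_mul_ln_small (r K eps : R) : 0 < r -> 0 < eps ->
  exists delta, 0 < delta /\ forall e, 0 < e < delta -> K * exp (r * ln e) < eps.
Proof.
  intros Hr Heps. set (q := eps / (Rabs K + 1)).
  assert (Hq : 0 < q) by (unfold q; apply Rdiv_lt_0_compat; [|pose proof (Rabs_pos K)]; lra).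
  exists (exp (ln q / r)). split; [apply exp_pos|]. intros e He.
  assert (L : r * ln e < ln q).
  { assert (ln e < ln q / r) by (rewrite <- (ln_exp (ln q / r)); apply ln_increasing; lra).
    apply Rmult_lt_compat_l with (r := r) in H; [|lra].
    replace (r * (ln q / r)) with (ln q) in H by (field; lra). lra. }
  assert (exp (r * ln e) < q) by (rewrite <- (exp_ln q) by auto; now apply exp_increasing).
  pose proof (exp_pos (r * ln e)). pose proof (Rabs_pos K). pose proof (Rle_abs K).
  assert (q * (Rabs K + 1) = eps) by (unfold q; field; lra).
  nra.
Qed.

Lemma improper_int01_of_primitive (f g F : R -> R) :
  (forall x, 0 < x <= 1 -> f x = g x) ->
  (forall x, 0 < x <= 1 -> is_derive F x (g x)) ->
  (forall x, 0 < x <= 1 -> continuous g x) ->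
  (forall eps, 0 < eps -> exists delta, 0 < delta /\ forall e, 0 < e < delta -> Rabs (F e) < eps) ->
  improper_int01 f (F 1).
Proof.
  intros Hfg Hder Hcont Hlim.
  assert (FTC : forall e, 0 < e <= 1 -> is_RInt f e 1 (F 1 - F e)).
  { intros e He. apply is_RInt_ext with g.
    { intros x Hx. rewrite Rmin_left, Rmax_right in Hx by lra. symmetry. apply Hfg. lra. }
    apply (is_RInt_derive F g e 1);
      intros x Hx; rewrite Rmin_left, Rmax_right in Hx by lra; [apply Hder|apply Hcont]; lra. }
  split.
  - intros e He. constructor. apply ex_RInt_Reals_0. eexists. now apply FTC.
  - intros eps Heps. destruct (Hlim eps Heps) as [delta [Hdelta Hsmall]].
    exists delta. split; [auto|]. intros e pr He1 He2 He3.
    rewrite <- RInt_Reals, (is_RInt_unique f e 1 _ (FTC e ltac:(lra))).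
    replace (F 1 - F e - F 1) with (- F e) by ring. rewrite Rabs_Ropp. apply Hsmall. lra.
Qed.

Lemma improper_int01_nonneg (f : R -> R) (I : R) :
  improper_int01 f I -> (forall x, 0 < x <= 1 -> 0 <= f x) -> 0 <= I.
Proof.
  intros [Hint Hlim] Hf. destruct (Rle_or_lt 0 I) as [|HI]; auto.
  destruct (Hlim (- I) ltac:(lra)) as [d [Hd Hclose]].
  set (e := Rmin (d / 2) 1).
  assert (He : 0 < e) by (unfold e; apply Rmin_glb_lt; lra).
  assert (He1 : e <= 1) by apply Rmin_r.
  assert (He2 : e < d) by (unfold e; eapply Rle_lt_trans; [apply Rmin_l|lra]).
  destruct (Hint e (conj He He1)) as [pr].
  specialize (Hclose e pr He He2 He1).
  assert (0 <= RiemannInt pr).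
  { rewrite <- RInt_Reals. apply RInt_ge_0; auto; [apply ex_RInt_Reals_1, pr|].
    intros; apply Hf; lra. }
  apply Rabs_def2 in Hclose. lra.
Qed.

Section MuntzIntegral.

Variables (n : nat) (lam b : nat -> C).
Hypothesis lam_re : forall j, (j < n)%nat -> - / 2 < fst (lam j).

Definition gram_term (j k : nat) (x : R) : R :=
  fst (b j * Cconj (b k) * cpow x (lam j + Cconj (lam k)))%C.

(* Termwise antiderivative of [gram_term]: x^(mu+1) / (mu+1) with mu = lam_j + conj lam_k. *)
Definition gram_primitive_term (j k : nat) (x : R) : R :=
  fst (b j * Cconj (b k) * / gram_den lam j k * cpow x (lam j + Cconj (lam k) + 1))%C.

Definition gram_primitive (x : R) : R :=
  Rsum n (fun j => Rsum n (fun k => gram_primitive_term j k x)).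

Lemma Cnorm2_muntz x :
  Cnorm2 (muntz n b lam x) = Rsum n (fun j => Rsum n (fun k => gram_term j k x)).
Proof.
  replace (Cnorm2 (muntz n b lam x)) with (fst (muntz n b lam x * Cconj (muntz n b lam x))%C)
    by (destruct (muntz n b lam x); unfold Cnorm2, Re, Im; simpl; ring).
  change (muntz n b lam x) with (Csum n (fun j => b j * cpow x (lam j))%C).
  rewrite Csum_conj, Csum_mul_Csum, fst_Csum. apply Rsum_ext; intros j Hj.
  rewrite fst_Csum. apply Rsum_ext; intros k Hk. unfold gram_term. f_equal.
  rewrite Cmult_conj, cpow_conj, cpow_add. cring.
Qed.

Lemma continuous_Cnorm2_muntz x : 0 < x -> continuous (fun t => Cnorm2 (muntz n b lam t)) x.
Proof.
  intros Hx.
  apply continuous_ext with (fun t => Rsum n (fun j => Rsum n (fun k => gram_term j k t))).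
  { intros t. symmetry. apply Cnorm2_muntz. }
  apply (@ex_derive_continuous R_AbsRing R_NormedModule). eexists.
  apply (is_derive_Rsum n (fun j t => Rsum n (fun k => gram_term j k t))). intros j Hj.
  apply (is_derive_Rsum n (gram_term j)). intros k Hk. now apply is_derive_fst_cpow.
Qed.

Lemma is_derive_gram_primitive_term j k x : (j < n)%nat -> (k < n)%nat -> 0 < x ->
  is_derive (gram_primitive_term j k) x (gram_term j k x).
Proof.
  intros Hj Hk Hx. unfold gram_term. set (mu := (lam j + Cconj (lam k))%C).
  replace (fst (b j * Cconj (b k) * cpow x mu)%C)
    with (fst (b j * Cconj (b k) * / gram_den lam j k * (mu + 1) * cpow x (mu + 1))%C / x).
  { now apply is_derive_fst_cpow. }
  rewrite cpow_add, cpow_1_r by auto.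
  replace (b j * Cconj (b k) * / gram_den lam j k * (mu + 1) * (cpow x mu * RtoC x))%C
    with (b j * Cconj (b k) * cpow x mu * RtoC x * (gram_den lam j k * / gram_den lam j k))%C
    by (unfold mu, gram_den; cring).
  rewrite Cinv_r by (apply (gram_den_neq0 n); auto).
  destruct (b j * Cconj (b k) * cpow x mu)%C as [p q]. simpl. field. lra.
Qed.

Lemma is_derive_gram_primitive x : 0 < x -> is_derive gram_primitive x (Cnorm2 (muntz n b lam x)).
Proof.
  intros Hx. rewrite Cnorm2_muntz.
  apply (is_derive_Rsum n (fun j t => Rsum n (fun k => gram_primitive_term j k t))). intros j Hj.
  apply (is_derive_Rsum n (gram_primitive_term j)). intros k Hk.
  now apply is_derive_gram_primitive_term.
Qed.

Lemma gram_primitive_1 : gram_primitive 1 = fst (gram n lam b b).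
Proof.
  unfold gram_primitive, gram. rewrite fst_Csum. apply Rsum_ext; intros j Hj.
  rewrite fst_Csum. apply Rsum_ext; intros k Hk. unfold gram_primitive_term.
  rewrite cpow_1_l. f_equal. cring.
Qed.

Lemma Rabs_gram_primitive_term_le rho j k e :
  rho <= fst (lam j) + / 2 -> rho <= fst (lam k) + / 2 -> 0 < e < 1 ->
  Rabs (gram_primitive_term j k e)
    <= Cmod (b j * Cconj (b k) * / gram_den lam j k)%C * exp (2 * rho * ln e).
Proof.
  intros Hj Hk He. unfold gram_primitive_term.
  eapply Rle_trans; [apply re_le_Cmod|]. rewrite Cmod_mult.
  apply Rmult_le_compat_l; [apply Cmod_ge_0|].
  change (Complex.Cmod (cpow e (lam j + Cconj (lam k) + 1)%C))
    with (Cmod (cpow e (lam j + Cconj (lam k) + 1)%C)).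
  rewrite Cmod_cpow.
  assert (Hln : ln e < 0) by (rewrite <- ln_1; apply ln_increasing; lra).
  assert (Hexp : fst ((lam j + Cconj (lam k) + 1)%C) * ln e <= 2 * rho * ln e) by (simpl; nra).
  destruct (Rle_lt_or_eq_dec _ _ Hexp) as [Hlt|Heq]; [now apply Rlt_le, exp_increasing|].
  rewrite Heq. apply Rle_refl.
Qed.

Lemma gram_primitive_vanishes eps : 0 < eps ->
  exists delta, 0 < delta /\ forall e, 0 < e < delta -> Rabs (gram_primitive e) < eps.
Proof.
  intros Heps.
  destruct (exists_uniform_lower_bound n (fun j => fst (lam j) + / 2)) as [rho [Hrho Hle]].
  { intros j Hj. pose proof (lam_re j Hj). lra. }
  set (K := Rsum n (fun j => Rsum n (fun k => Cmod (b j * Cconj (b k) * / gram_den lam j k)%C))).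
  destruct (exp_mul_ln_small (2 * rho) K eps ltac:(lra) Heps) as [delta [Hdelta Hsmall]].
  exists (Rmin delta 1). split; [apply Rmin_glb_lt; lra|]. intros e [He0 He].
  pose proof (Rmin_l delta 1). pose proof (Rmin_r delta 1).
  apply Rle_lt_trans with (K * exp (2 * rho * ln e)); [|apply Hsmall; lra].
  unfold K. rewrite <- Rsum_mulr. eapply Rle_trans; [apply Rabs_Rsum_le|].
  apply Rsum_le; intros j Hj. rewrite <- Rsum_mulr.
  eapply Rle_trans; [apply Rabs_Rsum_le|]. apply Rsum_le; intros k Hk.
  apply Rabs_gram_primitive_term_le; auto. lra.
Qed.

Lemma improper_int01_muntz (f : R -> R) :
  (forall x, 0 < x <= 1 -> f x = Cnorm2 (muntz n b lam x)) ->
  improper_int01 f (fst (gram n lam b b)).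
Proof.
  intros Hf. rewrite <- gram_primitive_1.
  apply improper_int01_of_primitive with (g := fun x => Cnorm2 (muntz n b lam x)); auto.
  - intros x Hx. apply is_derive_gram_primitive. lra.
  - intros x Hx. apply continuous_Cnorm2_muntz. lra.
  - apply gram_primitive_vanishes.
Qed.

Lemma gram_psd : 0 <= fst (gram n lam b b).
Proof.
  apply (improper_int01_nonneg (fun x => Cnorm2 (muntz n b lam x))).
  - now apply improper_int01_muntz.
  - intros; apply Cnorm2_nonneg.
Qed.

End MuntzIntegral.

Lemma derivable_pt_lim_muntz_Re (n : nat) (lam a : nat -> C) (x : R) : 0 < x ->
  derivable_pt_lim (fun t => Re (muntz n a lam t)) x (fst (muntz n (vdiag lam a) lam x) / x).
Proof.
  intros Hx. apply is_derive_Reals.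
  apply is_derive_ext with (fun t => Rsum n (fun j => fst (a j * cpow t (lam j))%C)).
  { intros t. unfold Re, muntz. now rewrite fst_Csum. }
  replace (fst (muntz n (vdiag lam a) lam x) / x)
    with (Rsum n (fun j => fst (a j * lam j * cpow x (lam j))%C / x)).
  { apply (is_derive_Rsum n (fun j t => fst (a j * cpow t (lam j))%C)).
    intros; now apply is_derive_fst_cpow. }
  unfold muntz. rewrite fst_Csum. unfold Rdiv. rewrite <- Rsum_mulr.
  apply Rsum_ext; intros j _. unfold vdiag. do 2 f_equal.
  change (a j * lam j * cpow x (lam j) = lam j * a j * cpow x (lam j))%C. cring.
Qed.

Lemma derivable_pt_lim_muntz_Im (n : nat) (lam a : nat -> C) (x : R) : 0 < x ->
  derivable_pt_lim (fun t => Im (muntz n a lam t)) x (snd (muntz n (vdiag lam a) lam x) / x).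
Proof.
  intros Hx. apply is_derive_Reals.
  apply is_derive_ext with (fun t => Rsum n (fun j => snd (a j * cpow t (lam j))%C)).
  { intros t. unfold Im, muntz. now rewrite snd_Csum. }
  replace (snd (muntz n (vdiag lam a) lam x) / x)
    with (Rsum n (fun j => snd (a j * lam j * cpow x (lam j))%C / x)).
  { apply (is_derive_Rsum n (fun j t => snd (a j * cpow t (lam j))%C)).
    intros; now apply is_derive_snd_cpow. }
  unfold muntz. rewrite snd_Csum. unfold Rdiv. rewrite <- Rsum_mulr.
  apply Rsum_ext; intros j _. unfold vdiag. do 2 f_equal.
  change (a j * lam j * cpow x (lam j) = lam j * a j * cpow x (lam j))%C. cring.
Qed.

Lemma x_mul_derivative_muntz (n : nat) (lam a : nat -> C) (Pd : R -> C) (x : R) : 0 < x ->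
  derivable_pt_lim (fun t => Re (muntz n a lam t)) x (Re (Pd x)) ->
  derivable_pt_lim (fun t => Im (muntz n a lam t)) x (Im (Pd x)) ->
  Cmult (x, 0) (Pd x) = muntz n (vdiag lam a) lam x.
Proof.
  intros Hx HRe HIm.
  pose proof (uniqueness_limite _ _ _ _ HRe (derivable_pt_lim_muntz_Re n lam a x Hx)) as ERe.
  pose proof (uniqueness_limite _ _ _ _ HIm (derivable_pt_lim_muntz_Im n lam a x Hx)) as EIm.
  unfold Re, Im in ERe, EIm. unfold Defs.Cmult, Re, Im. simpl.
  rewrite ERe, EIm. apply injective_projections; simpl; field; lra.
Qed.

(* [dsum] sums over pairs j < k; the induction naturally produces pairs k < j. *)
Lemma dsum_eq_wt_pair_sum (n : nat) (lam : nat -> C) : dsum n lam = wt_pair_sum lam n.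
Proof.
  unfold dsum, wt_pair_sum. induction n as [|n IHn]; [reflexivity|].
  rewrite !Rsum_S. replace (S n - n - 1)%nat with 0%nat by lia.
  rewrite (Rsum_ext n _ (fun j => wt lam j * Rsum (n - j - 1) (fun i => wt lam (j + 1 + i))
                                 + wt lam j * wt lam n)).
  - rewrite Rsum_add, IHn, Rsum_mulr. simpl. ring.
  - intros j Hj. replace (S n - j - 1)%nat with (S (n - j - 1)) by lia. rewrite Rsum_S.
    replace (j + 1 + (n - j - 1))%nat with n by lia. ring.
Qed.

Lemma sqrt_le_mul_sqrt (X c Y : R) : 0 <= c -> 0 <= Y -> X <= c ^ 2 * Y -> sqrt X <= c * sqrt Y.
Proof.
  intros Hc HY H. rewrite <- (sqrt_pow2 c Hc), <- sqrt_mult by (auto; apply pow2_ge_0).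
  now apply sqrt_le_1_alt.
Qed.

Theorem lemma12p12 (n : nat) (lam a : nat -> Cx) (Pd : R -> Cx) :
  (1 <= n)%nat ->
  (forall i j, (i < n)%nat -> (j < n)%nat -> i <> j -> lam i <> lam j) ->
  (forall j, (j < n)%nat -> Re (lam j) > - / 2) ->
  (forall x, 0 < x ->
     derivable_pt_lim (fun t => Re (muntz n a lam t)) x (Re (Pd x)) /\
     derivable_pt_lim (fun t => Im (muntz n a lam t)) x (Im (Pd x))) ->
  exists I1 I2,
    improper_int01 (fun x => Cnorm2 (Cmult (x, 0) (Pd x))) I1 /\
    improper_int01 (fun x => Cnorm2 (muntz n a lam x)) I2 /\
    sqrt I1 <= (maxmod n lam + sqrt (dsum n lam)) * sqrt I2.
Proof.
  intros _ _ Hre HPd.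
  assert (lam_re : forall j, (j < n)%nat -> - / 2 < fst (lam j)) by (intros; now apply Hre).
  exists (fst (gram n lam (vdiag lam a) (vdiag lam a))), (fst (gram n lam a a)).
  split; [|split].
  - apply improper_int01_muntz; auto. intros x Hx.
    destruct (HPd x ltac:(lra)) as [HRe HIm]. now rewrite (x_mul_derivative_muntz n lam a Pd x).
  - now apply improper_int01_muntz.
  - rewrite dsum_eq_wt_pair_sum.
    apply sqrt_le_mul_sqrt; [|apply gram_psd; auto|].
    + pose proof (maxmod_nonneg lam n). pose proof (sqrt_pos (wt_pair_sum lam n)). lra.
    + apply (snorm2_vdiag_le n (gram n lam) (gram_addl n lam) (gram_scall n lam)
               (gram_conj_sym n lam lam_re) (gram_supp0 n lam)
               (fun b => gram_psd n lam b lam_re) lam lam_re (gram_lyapunov n lam lam_re)).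
Qed.
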